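(* Let $G$ be a graph of order $n\ge 10$. If $G$ does not contain a trebly chorded cycle with three chords incident to a vertex, then $|E(G)|\le 4n-16$.
   Context: All graphs are finite and simple. A chord of a cycle $C$ is an edge joining two non-consecutive vertices of $C$. ''$G$ contains a trebly chorded cycle with three chords incident to a vertex'' means that $G$ has a cycle $C$ and three distinct edges of $G$, each a chord of $C$, all sharing a common endpoint. *)

From mathcomp Require Import all_boot.
Set Implicit Arguments. Unset Strict Implicit. Unset Printing Implicit Defensive.

Definition simple_graph (T : finType) (e : rel T) : Prop :=
  symmetric e /\ irreflexive e.

Definition edge_set (T : finType) (e : rel T) : {set {set T}} :=
  [set E : {set T} | [exists x, exists y, (E == [set x; y]) && e x y]].

Definition is_cycle (T : finType) (e : rel T) (c : seq T) : bool :=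
  [&& 3 <= size c, uniq c & cycle e c].

Definition is_chord (T : finType) (e : rel T) (c : seq T) (x y : T) : bool :=
  [&& e x y, x \in c, y \in c, y != next c x & x != next c y].

Definition has_trebly_chorded_cycle_at_vertex (T : finType) (e : rel T) : Prop :=
  exists (c : seq T) (v u1 u2 u3 : T),
    [/\ is_cycle e c, [&& u1 != u2, u1 != u3 & u2 != u3] &
        [&& is_chord e c v u1, is_chord e c v u2 & is_chord e c v u3]].

(* Induction on the vertex set, with the bound 2m for m <= 8 vertices and 4m - 16
   for m >= 9, which survives the deletion of a vertex of degree at most 2 (resp. 4).
   A vertex v seeing five vertices of a path that avoids v yields the configuration:
   the part of the path between the two outermost neighbours, closed through v, is a
   cycle on which v has three chords. With minimum degree 5 the end of a maximal path
   is such a v. On at most 8 vertices with minimum degree 3 and more than 2m edges, a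
   vertex v of maximum degree has degree at least 5, and a path through five of its
   neighbours in G - v is found by an exhaustive search over graphs on at most 7
   vertices, listing the neighbours of v first and each block by decreasing degree. *)

From mathcomp Require Import all_boot zify.
Set Implicit Arguments. Unset Strict Implicit. Unset Printing Implicit Defensive.

Section InducedSubgraph.
Variables (T : finType) (e : rel T).
Hypotheses (e_sym : symmetric e) (e_irr : irreflexive e).

Definition nbr (A : {set T}) x := [set y in A | e x y].
Definition deg (A : {set T}) x := #|nbr A x|.
Definition edges_in (A : {set T}) := [set E in edge_set e | E \subset A].

Lemma edges_inT : edges_in setT = edge_set e.
Proof. by apply/setP => E; rewrite inE subsetT andbT. Qed.

Lemma edge_setP E : reflect (exists x y, E = [set x; y] /\ e x y) (E \in edge_set e).
Proof.
rewrite inE; apply: (iffP existsP) => [[x /existsP[y /andP[/eqP-> exy]]]|[x [y [-> exy]]]].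
  by exists x, y.
by exists x; apply/existsP; exists y; rewrite eqxx.
Qed.

Lemma in_edges_in (A E : {set T}) : (E \in edges_in A) = (E \in edge_set e) && (E \subset A).
Proof. by rewrite inE. Qed.

Lemma edges_in0 : edges_in set0 = set0.
Proof.
apply/setP => E; rewrite in_edges_in in_set0; apply/andP => -[/edge_setP[x [y [-> _]]]].
by rewrite subset0 => /eqP/setP/(_ x); rewrite !inE eqxx.
Qed.

Lemma card_edges_inD1 (A : {set T}) x :
  x \in A -> #|edges_in A| = #|edges_in (A :\ x)| + deg A x.
Proof.
move=> xA; set at_x := [set E : {set T} | x \in E].
rewrite -(cardsID at_x (edges_in A)) addnC.
have -> : edges_in A :\: at_x = edges_in (A :\ x).
  by apply/setP => E; rewrite !inE subsetD1; case: (x \in E); rewrite ?andbF ?andbT.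
have -> : edges_in A :&: at_x = [set [set x; y] | y in nbr A x].
  apply/setP => E; rewrite in_setI in_edges_in [E \in at_x]inE; apply/idP/imsetP.
    case/andP=> /andP[/edge_setP[a [b [-> eab]]] sub]; rewrite !inE.
    have [aA bA] : a \in A /\ b \in A by split; apply: (subsetP sub); rewrite !inE eqxx ?orbT.
    case/orP=> /eqP->; first by exists b; rewrite // inE bA.
    by exists a; [rewrite inE aA e_sym | apply: setUC].
  case=> y; rewrite inE => /andP[yA exy] ->; rewrite set21 andbT.
  apply/andP; split; first by apply/edge_setP; exists x, y.
  by apply/subsetP => z /set2P[|] ->.
rewrite card_in_imset // => y z; rewrite !inE => /andP[_ exy] /andP[_ exz] eq_xyz.
have : y \in [set x; z] by rewrite -eq_xyz set22.
by case/set2P => // yx; rewrite yx e_irr in exy.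
Qed.

Lemma degD1 (A : {set T}) x y : x \in A -> y \in A :\ x -> deg A y = deg (A :\ x) y + e y x.
Proof.
move=> xA yAx; rewrite /deg (cardsD1 x (nbr A y)) addnC !inE xA /=; congr (_ + _).
by apply: eq_card => z; rewrite !inE andbA.
Qed.

Lemma sum_deg (A : {set T}) : \sum_(y in A) deg A y = 2 * #|edges_in A|.
Proof.
have [n] := ubnP #|A|; elim: n A => // n IH A ltA.
have [->|[x xA]] := set_0Vmem A; first by rewrite big_set0 edges_in0 cards0.
rewrite (bigD1 x) //= (card_edges_inD1 xA).
rewrite (eq_bigl [in A :\ x]) => [|y]; last by rewrite !inE andbC.
rewrite (eq_bigr (fun y => deg (A :\ x) y + e y x)) => [|y]; last exact: degD1.
rewrite big_split /= IH; last by rewrite (cardsD1 x A) xA in ltA.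
rewrite -big_mkcondr /= sum1dep_card.
have -> : #|[set y | (y \in A :\ x) && e y x]| = deg A x.
  apply: eq_card => z; rewrite !inE e_sym.
  by case: eqVneq => [->|]; rewrite ?e_irr ?andbF.
lia.
Qed.

End InducedSubgraph.

Section ChordedCycles.
Variables (T : finType) (e : rel T).
Hypotheses (e_sym : symmetric e) (e_irr : irreflexive e).

Lemma is_chord_head v a r u : uniq (v :: a :: r) -> u \in r -> u != last a r ->
  e v u -> is_chord e (v :: a :: r) v u.
Proof.
move=> uvar ur ul evu; have /andP[var /andP[ar _]] := uvar.
have next_v : next (v :: a :: r) v = a by rewrite /= eqxx.
have uc : u \in v :: a :: r by rewrite !inE ur !orbT.
rewrite /is_chord next_v evu mem_head uc.
rewrite !andTb; apply/andP; split; first by apply: contraNneq ar => <-.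
apply: contra_neq ul => next_uv.
rewrite -(prev_next uvar u) -next_uv prev_nth mem_head.
by rewrite memNindex //= -[size r]/(size (a :: r)).-1 nth_last.
Qed.

Lemma trebly_chorded_of_fan v a r : uniq (v :: a :: r) -> path e a r ->
  e v a -> e v (last a r) -> 3 <= count [pred u | e v u && (u != last a r)] r ->
  has_trebly_chorded_cycle_at_vertex e.
Proof.
move=> uvar par eva evl count3.
set f := [seq u <- r | e v u && (u != last a r)].
have size_f : 2 < size f by rewrite size_filter.
have [f1 f0] : 1 < size f /\ 0 < size f by split; [exact: ltnW | exact: ltnW (ltnW size_f)].
have uniq_f : uniq f by rewrite filter_uniq //; case/and3P: uvar.
have chord_f i : i < size f -> is_chord e (v :: a :: r) v (nth v f i).
  move/(mem_nth v); rewrite mem_filter => /andP[/andP[evu ul] ur].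
  exact: is_chord_head.
have size_r : 0 < size r by case: (r) count3.
exists (v :: a :: r), v, (nth v f 0), (nth v f 1), (nth v f 2); split.
- by rewrite /is_cycle uvar /= rcons_path par eva e_sym evl !ltnS size_r.
- by rewrite !nth_uniq.
- by apply/and3P; split; apply: chord_f.
Qed.

Lemma trim_path (P : pred T) p : has P p -> uniq p -> sorted e p ->
  exists a r, [/\ {subset a :: r <= p}, uniq (a :: r), path e a r,
                  count P (a :: r) = count P p & P a && P (last a r)].
Proof.
have [n] := ubnP (size p); elim: n p => // n IH [//|x q] lt_n hasP uxq pxq.
case Px: (P x); last first.
  rewrite /= Px in hasP; have /andP[_ uq] := uxq.
  have [a [r [sub ur par cP ends]]] := IH q lt_n hasP uq (path_sorted pxq).
  by exists a, r; split; rewrite /= ?cP ?Px // => y /sub yq; rewrite inE yq orbT.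
case Pl: (P (last x q)); first by exists x, q; split => //; rewrite Px.
move: lt_n hasP uxq pxq; rewrite lastI -cats1 size_cat addn1 ltnS count_cat has_cat.
rewrite cat_uniq /= Pl !orbF addn0 andbT => lt_n hasP /andP[ub _] /cat_sorted2[sb _].
have [a [r [sub ur par cP ends]]] := IH _ lt_n hasP ub sb.
by exists a, r; split; rewrite ?addn0 // => y /sub; rewrite mem_cat => ->.
Qed.

Lemma trebly_chorded_of_path v p : v \notin p -> uniq p -> sorted e p ->
  5 <= count (e v) p -> has_trebly_chorded_cycle_at_vertex e.
Proof.
move=> vp up sp count5.
have hasP : has (e v) p by rewrite has_count (leq_trans _ count5).
have [a [r [sub uar par count_ar /andP[eva evl]]]] := trim_path hasP up sp.
apply: (@trebly_chorded_of_fan v a r) => //.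
  by rewrite cons_uniq uar andbT; apply: contra vp => /sub.
set l := last a r.
have : count (e v) r <= count [pred u | e v u && (u != l)] r + count (pred1 l) r.
  rewrite -count_predUI; apply: (leq_trans _ (leq_addr _ _)).
  by apply: sub_count => u /= evu; rewrite evu andTb orNb.
have : count (pred1 l) r <= 1 by rewrite count_uniq_mem ?leq_b1 //; case/andP: uar.
by move: count5; rewrite -count_ar /= eva; lia.
Qed.

Lemma maximal_path (A : {set T}) x r :
  uniq (x :: r) -> path e x r -> {subset x :: r <= A} ->
  exists y s, [/\ uniq (y :: s), path e y s, {subset y :: s <= A} & {subset nbr e A y <= s}].
Proof.
have [n] := ubnP (#|A| - size r); elim: n x r => // n IH x r lt_n uxr pxr sub.
case: (pickP [pred y | (y \in nbr e A x) && (y \notin x :: r)]) => [y /andP[] | stuck].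
  rewrite inE => /andP[yA exy] yxr.
  have uyxr : uniq (y :: x :: r) by rewrite cons_uniq yxr uxr.
  have size_yxr : size (y :: x :: r) <= #|A|.
    rewrite -(card_uniqP uyxr); apply/subset_leq_card/subsetP => z.
    by rewrite inE => /orP[/eqP-> | /sub].
  apply: (IH y (x :: r)) => //=; first by move: lt_n size_yxr => /=; lia.
    by rewrite e_sym exy.
  by move=> z; rewrite inE => /orP[/eqP-> | /sub].
exists x, r; split => // y yx.
have : y \in x :: r by apply: contraFT (stuck y) => yn /=; rewrite yx yn.
rewrite inE => /orP[/eqP yx_eq|//].
by move: yx; rewrite yx_eq inE e_irr andbF.
Qed.

Lemma trebly_chorded_of_min_deg (A : {set T}) x : x \in A ->
  (forall y, y \in A -> 5 <= deg e A y) -> has_trebly_chorded_cycle_at_vertex e.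
Proof.
move=> xA deg5.
have [|y [r [/andP[yr ur] pyr sub nbr_r]]] := @maximal_path A x [::] isT isT.
  by move=> z; rewrite inE => /eqP->.
apply: (trebly_chorded_of_path yr ur (path_sorted pyr)).
apply: leq_trans (deg5 y (sub y (mem_head y r))) _.
rewrite -size_filter /deg -(card_uniqP (filter_uniq _ ur)).
by apply/subset_leq_card/subsetP => z zn; rewrite mem_filter nbr_r // andbT; case/setIdP: zn.
Qed.

End ChordedCycles.

Section FanSearch.
Variables h d : nat.

(* A graph on [0, h) is encoded by rows: row i lists its adjacency to i+1, ..., h-1.
   The vertices [0, d) stand for the neighbours of a deleted vertex of degree d, which
   is counted back in [degrees]. *)
Definition adj_rows (b : seq (seq bool)) i j : bool :=
  if i < j then nth false (nth [::] b i) (j - i.+1)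
  else if j < i then nth false (nth [::] b j) (i - j.+1) else false.

Definition rows_of (G : nat -> nat -> bool) : seq (seq bool) :=
  mkseq (fun i => mkseq (fun t => G i (i.+1 + t)) (h - i.+1)) h.

Definition rows_shaped (b : seq (seq bool)) :=
  size b = h /\ forall i, i < h -> size (nth [::] b i) = h - i.+1.

Definition degrees (G : nat -> nat -> bool) : seq nat :=
  [seq count (G i) (iota 0 h) + (i < d) | i <- iota 0 h].

Definition degree_ok i dg prev : bool :=
  [&& 3 <= dg, dg <= d & [|| i == 0, i == d | dg <= prev]].

(* Degrees in [3, d], nonincreasing on [0, d) and on [d, h), and summing (with the
   deleted vertex) to at least 4(h + 1) + 2, i.e. more than 2(h + 1) edges. *)
Definition degrees_ok (ds : seq nat) : bool :=
  all (fun i => degree_ok i (nth 0 ds i) (nth 0 ds i.-1)) (iota 0 h)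
  && (4 * h + 6 <= d + sumn ds).

Definition fan_path (G : nat -> nat -> bool) (q : seq nat) : bool :=
  [&& uniq q, all (fun i => i < h) q, sorted G q & 5 <= count (fun i => i < d) q].

Fixpoint find_some (A B : Type) (f : A -> option B) (s : seq A) : option B :=
  if s is x :: s' then (if f x is Some y then Some y else find_some f s') else None.

Fixpoint fan_dfs (nbrs : nat -> seq nat) fuel (cur : seq nat) cnt last :=
  if 5 <= cnt then Some cur else
  if fuel is fuel'.+1 then
    find_some (fun j => if j \in cur then None
                        else fan_dfs nbrs fuel' (j :: cur) (cnt + (j < d)) j) (nbrs last)
  else None.

Definition fan_search (G : nat -> nat -> bool) : option (seq nat) :=
  let nbrs i := [seq j <- iota 0 h | G i j] in
  find_some (fun i => fan_dfs nbrs h [:: i] (i < d) i) (iota 0 h).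

(* The search is not verified: its answer is checked. *)
Definition leaf_ok (b : seq (seq bool)) : bool :=
  let G := adj_rows b in
  if degrees_ok (degrees G) then
    if fan_search G is Some q then fan_path G q else false
  else true.

Definition deg_prefix (pre : seq (seq bool)) i : nat :=
  count (fun k => nth false (nth [::] pre k) (i - k.+1)) (iota 0 i).

Fixpoint all_rows n (k : seq bool -> bool) (acc : seq bool) : bool :=
  if n is n'.+1 then all_rows n' k (true :: acc) && all_rows n' k (false :: acc)
  else k acc.

(* Once row i is chosen the degree of vertex i is known, which prunes the enumeration. *)
Fixpoint check_from i fuel (pre : seq (seq bool)) prev : bool :=
  if fuel is fuel'.+1 then
    all_rows (h - i.+1) (fun r =>
      let dg := deg_prefix pre i + count id r + (i < d) in
      if degree_ok i dg prev then check_from i.+1 fuel' (rcons pre r) dg else true) [::]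
  else leaf_ok pre.

Definition fan_check : bool := check_from 0 h [::] 0.

Lemma all_rows_sound n k acc : all_rows n k acc -> forall l, size l = n -> k (l ++ acc).
Proof.
elim: n acc => [|n IH] acc /=; first by move=> kacc [].
case/andP=> all_t all_f l; case/lastP: l => [//|l x]; rewrite size_rcons => -[size_l].
by rewrite cat_rcons; case: x; [apply: IH all_t _ size_l | apply: IH all_f _ size_l].
Qed.

Lemma nth_degrees G i : i < h -> nth 0 (degrees G) i = count (G i) (iota 0 h) + (i < d).
Proof. by move=> ih; rewrite (nth_map 0) ?size_iota // nth_iota. Qed.

Lemma deg_prefix_rows b i : rows_shaped b -> i < h ->
  deg_prefix (take i b) i + count id (nth [::] b i) + (i < d) = nth 0 (degrees (adj_rows b)) i.
Proof.
move=> [size_b size_row] ih; rewrite nth_degrees //.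
have -> : h = i + (1 + (h - i.+1)) by lia.
rewrite iotaD iotaD !count_cat addnA -!addnA; congr (_ + _).
- apply: eq_in_count => k; rewrite mem_iota add0n /= => ki.
  by rewrite /adj_rows ltnNge (ltnW ki) /= ki nth_take.
- rewrite add0n /= {1}/adj_rows ltnn add0n addn1; congr (_ + _).
  rewrite -{1}(mkseq_nth false (nth [::] b i)) count_map size_row //.
  rewrite (_ : iota i.+1 _ = map (addn i.+1) (iota 0 (h - i.+1))); last by rewrite -iotaDl addn0.
  rewrite count_map; apply: eq_in_count => t _ /=.
  by rewrite /adj_rows (ltn_addr _ (ltnSn i)) addKn.
Qed.

Lemma check_from_sound b : rows_shaped b -> degrees_ok (degrees (adj_rows b)) ->
  forall fuel i pre prev, i + fuel = h -> pre = take i b ->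
  (0 < i -> prev = nth 0 (degrees (adj_rows b)) i.-1) ->
  check_from i fuel pre prev -> leaf_ok b.
Proof.
move=> shb ok_b; elim=> [|fuel IH] i pre prev.
  by rewrite addn0 => -> -> _ /=; rewrite take_oversize ?shb.1.
move=> i_fuel -> prev_i /=.
have ih : i < h by lia.
move/all_rows_sound => /(_ (nth [::] b i) (shb.2 i ih)); rewrite cats0 deg_prefix_rows //.
have ok_i : degree_ok i (nth 0 (degrees (adj_rows b)) i) prev.
  case/andP: ok_b => /allP /(_ i); rewrite mem_iota ih => /(_ isT) /and3P[d3 dd ord_i] _.
  by rewrite /degree_ok d3 dd; case: (posnP i) ord_i => [->|/prev_i <-].
rewrite ok_i => /IH; apply => //; first by lia.
by rewrite (take_nth [::]) // shb.1.
Qed.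

Lemma rows_of_shaped G : rows_shaped (rows_of G).
Proof. by split=> [|i ih]; rewrite ?size_mkseq // nth_mkseq // size_mkseq. Qed.

Lemma adj_rows_of G : (forall i j, G i j = G j i) -> (forall i, G i i = false) ->
  forall i j, i < h -> j < h -> adj_rows (rows_of G) i j = G i j.
Proof.
move=> G_sym G_irr i j ih jh; rewrite /adj_rows /rows_of; case: ltngtP => [ij|ji|->].
- by rewrite nth_mkseq // nth_mkseq ?subnKC //; lia.
- by rewrite nth_mkseq // nth_mkseq ?subnKC // ?G_sym //; lia.
- by rewrite G_irr.
Qed.

Lemma fan_check_sound G : fan_check ->
  (forall i j, G i j = G j i) -> (forall i, G i i = false) ->
  degrees_ok (degrees G) -> exists q, fan_path G q.
Proof.
move=> check G_sym G_irr ok_G.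
have G_rows := adj_rows_of G_sym G_irr.
have deg_rows : degrees (adj_rows (rows_of G)) = degrees G.
  apply/eq_in_map => i; rewrite mem_iota => ih; congr (_ + _).
  by apply: eq_in_count => j; rewrite mem_iota => jh; rewrite /= G_rows.
have : leaf_ok (rows_of G).
  apply: (check_from_sound (rows_of_shaped G) _ (add0n h) (esym (take0 _)) _ check) => //.
  by rewrite deg_rows.
rewrite /leaf_ok deg_rows ok_G; case: fan_search => [q|//] /and4P[uq q_h q_path q_d].
exists q; apply/and4P; split => //.
case: q q_h q_path {uq q_d} => [|x q] //= q_h.
by rewrite -(eq_in_path (P := fun i => i < h) (e := adj_rows (rows_of G))).
Qed.

End FanSearch.

Lemma fan_check_small h d : 5 <= d <= h -> h <= 7 -> fan_check h d.
Proof.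
move=> /andP[d5 dh] h7.
have : all (fun hd => fan_check hd.1 hd.2) [:: (5, 5); (6, 5); (6, 6); (7, 5); (7, 6); (7, 7)].
  by vm_compute.
move/allP/(_ (h, d)); apply; rewrite !inE !xpair_eqE.
lia.
Qed.

Section SmallDenseGraph.
Variables (T : finType) (e : rel T).
Hypotheses (e_sym : symmetric e) (e_irr : irreflexive e).
Variables (A : {set T}) (v : T).
Hypothesis vA : v \in A.

Local Notation d := (deg e A v).

Lemma exists_fan_order : exists s : seq T, [/\ uniq s, s =i A :\ v,
  forall i, i < size s -> e v (nth v s i) = (i < d)
  & forall i, i.+1 < size s -> i.+1 != d -> deg e A (nth v s i.+1) <= deg e A (nth v s i)].
Proof.
pose geq_deg x y := deg e A y <= deg e A x.
have total_geq : total geq_deg by move=> x y; apply: leq_total.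
set s1 := sort geq_deg (enum (nbr e A v)).
set s2 := sort geq_deg (enum [set y in A :\ v | ~~ e v y]).
have size_s1 : size s1 = d by rewrite size_sort -cardE.
have mem_s1 y : (y \in s1) = (y \in A) && e v y by rewrite mem_sort mem_enum inE.
have mem_s2 y : (y \in s2) = [&& y != v, y \in A & ~~ e v y].
  by rewrite mem_sort mem_enum !inE andbA.
have s1_nbr i : i < size s1 -> e v (nth v s1 i) by move/(mem_nth v); rewrite mem_s1 => /andP[].
have s2_nbr i : i < size s2 -> ~~ e v (nth v s2 i) by move/(mem_nth v); rewrite mem_s2 => /and3P[].
exists (s1 ++ s2); split.
- rewrite cat_uniq !sort_uniq !enum_uniq /= andbT; apply/hasPn => y.
  by rewrite mem_s2 mem_s1 => /and3P[_ _ /negbTE->]; rewrite andbF.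
- move=> y; rewrite mem_cat mem_s1 mem_s2 !inE.
  by case: eqVneq => [->|]; case: (e v y); rewrite ?e_irr ?andbF ?andbT ?orbF.
- move=> i; rewrite size_cat nth_cat size_s1 => lt_i; case: (ltnP i d) => [lt_id|le_di].
    by rewrite s1_nbr ?size_s1.
  by apply/negbTE/s2_nbr; lia.
- move=> i; rewrite size_cat !nth_cat size_s1 => lt_i neq_i; case: (ltnP i.+1 d) => [lt_id|le_di].
  + by rewrite (ltnW lt_id); apply/(sortedP v (sort_sorted total_geq _)); rewrite size_s1.
  + have lt_di : d <= i by rewrite leq_eqVlt eq_sym (negbTE neq_i) in le_di.
    rewrite ltnNge lt_di /= subSn //.
    by apply/(sortedP v (sort_sorted total_geq _)); rewrite -/s2; lia.
Qed.

Definition fan_adj (s : seq T) i j := e (nth v s i) (nth v s j).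

Section FanOrder.
Variable s : seq T.
Hypotheses (uniq_s : uniq s) (mem_s : s =i A :\ v).
Hypothesis nbr_s : forall i, i < size s -> e v (nth v s i) = (i < d).

Lemma size_fan_order : size s = #|A|.-1.
Proof. by rewrite -(card_uniqP uniq_s) (eq_card mem_s) (cardsD1 v A) vA. Qed.

Lemma count_fan_adj i : i < size s ->
  count (fan_adj s i) (iota 0 (size s)) + (i < d) = deg e A (nth v s i).
Proof.
move=> lt_i; set x := nth v s i.
have xAv : x \in A :\ v by rewrite -mem_s mem_nth.
rewrite /deg (cardsD1 v (nbr e A x)) addnC !inE vA e_sym nbr_s //; congr (_ + _).
have -> : count (fan_adj s i) (iota 0 (size s)) = count (e x) s.
  by rewrite -[in RHS](mkseq_nth v s) /mkseq count_map.
rewrite -size_filter -(card_uniqP (filter_uniq _ uniq_s)); apply: eq_card => y.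
by rewrite mem_filter mem_s !inE; case: (e x y); rewrite ?andbT ?andbF.
Qed.

Lemma degrees_fan : degrees (size s) d (fan_adj s) = map (deg e A) s.
Proof.
rewrite /degrees -[in RHS](mkseq_nth v s) /mkseq -map_comp.
by apply/eq_in_map => i; rewrite mem_iota => lt_i; apply: count_fan_adj.
Qed.

Lemma sumn_deg_fan : sumn (map (deg e A) s) = \sum_(x in A :\ v) deg e A x.
Proof.
rewrite sumnE big_map -big_enum; apply/perm_big/uniq_perm => //; first exact: enum_uniq.
by move=> y; rewrite mem_enum mem_s.
Qed.

Hypothesis sorted_s :
  forall i, i.+1 < size s -> i.+1 != d -> deg e A (nth v s i.+1) <= deg e A (nth v s i).

Lemma degrees_ok_fan : (forall x, x \in A -> 3 <= deg e A x <= d) ->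
  4 * #|A| + 2 <= \sum_(x in A) deg e A x ->
  degrees_ok (size s) d (degrees (size s) d (fan_adj s)).
Proof.
move=> deg_A sum_A; rewrite /degrees_ok degrees_fan sumn_deg_fan; apply/andP; split.
  apply/allP => i; rewrite mem_iota => /andP[_ lt_i].
  have : nth v s i \in A by have := mem_nth v lt_i; rewrite mem_s => /setD1P[].
  move/deg_A; rewrite /degree_ok (nth_map v) // => /andP[-> ->] /=.
  case: (posnP i) => [-> //|pos_i]; case: eqVneq => [// |neq_i].
  have lt_pi : i.-1 < size s by rewrite (leq_ltn_trans (leq_pred i)).
  by rewrite (nth_map v) // -{1}(prednK pos_i) sorted_s ?prednK ?orbT.
move: sum_A; rewrite (bigD1 v) //= (eq_bigl [in A :\ v]) => [|y]; last by rewrite !inE andbC.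
have : 0 < #|A| by apply/card_gt0P; exists v.
by rewrite size_fan_order; lia.
Qed.

Lemma fan_path_chorded q : fan_path (size s) d (fan_adj s) q ->
  has_trebly_chorded_cycle_at_vertex e.
Proof.
case/and4P=> uniq_q /allP q_s path_q count_q.
apply: (@trebly_chorded_of_path _ _ e_sym v (map (nth v s) q)).
- apply/mapP => -[i /q_s lt_i v_i].
  by have := mem_nth v lt_i; rewrite mem_s -v_i !inE eqxx.
- rewrite map_inj_in_uniq // => i j /q_s lt_i /q_s lt_j nth_ij.
  by apply/eqP; rewrite -(nth_uniq v lt_i lt_j uniq_s) nth_ij.
- by rewrite sorted_map.
- rewrite count_map (eq_in_count (a2 := fun i => i < d)) // => i /q_s lt_i.
  by rewrite /preim /= nbr_s.
Qed.

End FanOrder.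

Lemma trebly_chorded_of_dense_small : #|A| <= 8 ->
  (forall x, x \in A -> 3 <= deg e A x <= d) -> 5 <= d ->
  4 * #|A| + 2 <= \sum_(x in A) deg e A x -> has_trebly_chorded_cycle_at_vertex e.
Proof.
move=> A8 deg_A d5 sum_A.
have [s [uniq_s mem_s nbr_s sorted_s]] := exists_fan_order.
have d_s : d <= size s.
  rewrite -(card_uniqP uniq_s); apply/subset_leq_card/subsetP => y.
  rewrite inE mem_s !inE => /andP[yA evy]; rewrite yA andbT.
  by apply: contraTneq evy => ->; rewrite e_irr.
have fan_sym i j : fan_adj s i j = fan_adj s j i by apply: e_sym.
have fan_irr i : fan_adj s i i = false by apply: e_irr.
have check : fan_check (size s) d.
  by apply: fan_check_small; [rewrite d5 d_s | rewrite size_fan_order; case: #|A| A8].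
have ok_s := degrees_ok_fan uniq_s mem_s nbr_s sorted_s deg_A sum_A.
have [q] := fan_check_sound check fan_sym fan_irr ok_s.
exact: fan_path_chorded.
Qed.

End SmallDenseGraph.

Definition edge_bound m := if m <= 8 then 2 * m else 4 * m - 16.

Lemma edge_boundS m k : k <= (if m.+1 <= 8 then 2 else 4) ->
  edge_bound m + k <= edge_bound m.+1.
Proof. by rewrite /edge_bound; case: (leqP m 8); case: (leqP m.+1 8); lia. Qed.

Section EdgeBound.
Variables (T : finType) (e : rel T).
Hypotheses (e_sym : symmetric e) (e_irr : irreflexive e).
Hypothesis no_chorded : ~ has_trebly_chorded_cycle_at_vertex e.

Lemma card_edges_in_small (A : {set T}) : #|A| <= 8 ->
  (forall x, x \in A -> 3 <= deg e A x) -> #|edges_in e A| <= 2 * #|A|.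
Proof.
move=> A8 deg3; rewrite leqNgt; apply/negP => many.
have sum_A := sum_deg e_sym e_irr A.
have [A0|[x0 x0A]] := set_0Vmem A; first by move: many; rewrite A0 edges_in0 !cards0.
have [v vA v_max] := arg_maxnP (deg e A) x0A.
apply: no_chorded; apply: (trebly_chorded_of_dense_small e_sym e_irr vA A8).
- by move=> x xA; apply/andP; split; [apply: deg3 | apply: v_max].
- rewrite leqNgt; apply/negP => v_small.
  have : \sum_(y in A) deg e A y <= \sum_(y in A) 4.
    by apply: leq_sum => y /v_max; lia.
  by rewrite sum_nat_const; lia.
- by lia.
Qed.

Lemma card_edges_in_le (A : {set T}) : #|edges_in e A| <= edge_bound #|A|.
Proof.
have [n] := ubnP #|A|; elim: n A => // n IH A lt_n.
case: (boolP [exists x in A, deg e A x <= if #|A| <= 8 then 2 else 4]).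
  case/exists_inP => x xA low_x.
  have card_Ax : #|A| = #|A :\ x|.+1 by rewrite (cardsD1 x A) xA.
  rewrite card_Ax in low_x *; rewrite (card_edges_inD1 e_sym e_irr xA).
  by apply: leq_trans (edge_boundS low_x); rewrite leq_add2r IH // -ltnS -card_Ax.
move/exists_inP => high.
have {}high x : x \in A -> (if #|A| <= 8 then 2 else 4) < deg e A x.
  by move=> xA; rewrite ltnNge; apply/negP => low_x; apply: high; exists x.
case: (leqP #|A| 8) => A8 in high *.
  by rewrite /edge_bound A8; apply: card_edges_in_small.
have [x0 x0A] : exists x, x \in A by apply/card_gt0P; lia.
by case: no_chorded; apply: (trebly_chorded_of_min_deg e_sym e_irr x0A).
Qed.

End EdgeBound.

Theorem lemma2p6 (T : finType) (e : rel T) :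
  simple_graph e -> 10 <= #|T| ->
  ~ has_trebly_chorded_cycle_at_vertex e ->
  #|edge_set e| <= 4 * #|T| - 16.
Proof.
move=> [e_sym e_irr] n10 no_chorded.
have large_T : (#|T| <= 8) = false by apply/negbTE; rewrite -ltnNge; lia.
have := card_edges_in_le e_sym e_irr no_chorded [set: T].
by rewrite edges_inT cardsT /edge_bound large_T.
Qed.
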